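(* For all finite sets of formulas $\Gamma,\Delta$: if $\Gamma\Vdash\Delta$, then the sequent $\Gamma\Rightarrow\Delta$ is provable in $\mathsf{CLp}$.
   Context: Fix a countably infinite set $\mathsf{At}$ of atoms. Formulas are built from atoms and the constant $\bot$ using the binary connectives $\land,\lor,\to$. All contexts are finite sets (not multisets) of formulas; a comma denotes union; a subscript $\mathsf{At}$ indicates a finite set of atoms. An atomic sequent has the form $\Gamma_{\mathsf{At}} \Rightarrow \Delta_{\mathsf{At}}$. An atomic rule has finitely many (possibly zero) atomic sequents as premises and one atomic sequent as conclusion; a rule with zero premises is an atomic axiom. A base is a (possibly empty) set of atomic rules; $\mathcal{C}\supseteq\mathcal{B}$ ($\mathcal{C}$ extends $\mathcal{B}$) if $\mathcal{C}$ contains every rule of $\mathcal{B}$. Derivability $\vdash_{\mathcal{B}}$ of atomic sequents is the least relation such that: (Axiom/Weakening) if an atomic axiom with conclusion $\Gamma_{\mathsf{At}}\Rightarrow\Delta_{\mathsf{At}}$ is in $\mathcal{B}$, then $\vdash_{\mathcal{B}} \Theta_{\mathsf{At}},\Gamma_{\mathsf{At}}\Rightarrow\Delta_{\mathsf{At}},\Sigma_{\mathsf{At}}$ for all sets of atoms $\Theta_{\mathsf{At}},\Sigma_{\mathsf{At}}$; (Mix) if a rule with premises $\Gamma^i_{\mathsf{At}}\Rightarrow\Delta^i_{\mathsf{At}}$ ($1\le i\le n$) and conclusion $\Gamma_{\mathsf{At}}\Rightarrow\Delta_{\mathsf{At}}$ is in $\mathcal{B}$ and $\vdash_{\mathcal{B}}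 \Theta^i_{\mathsf{At}},\Gamma^i_{\mathsf{At}}\Rightarrow\Delta^i_{\mathsf{At}},\Sigma^i_{\mathsf{At}}$ for each $i$, then $\vdash_{\mathcal{B}} \Theta^1_{\mathsf{At}},\dots,\Theta^n_{\mathsf{At}},\Gamma_{\mathsf{At}}\Rightarrow\Delta_{\mathsf{At}},\Sigma^1_{\mathsf{At}},\dots,\Sigma^n_{\mathsf{At}}$. Support $\Vdash_{\mathcal{B}}$: (At) $\Vdash_{\mathcal{B}}\Gamma_{\mathsf{At}}$ iff $\vdash_{\mathcal{B}}\ \Rightarrow\Gamma_{\mathsf{At}}$; ($\land$) $\Vdash_{\mathcal{B}} A\land B,\Gamma$ iff $\Vdash_{\mathcal{B}}A,\Gamma$ and $\Vdash_{\mathcal{B}}B,\Gamma$; ($\lor$) $\Vdash_{\mathcal{B}}A\lor B,\Gamma$ iff $\Vdash_{\mathcal{B}}A,B,\Gamma$; ($\to$) $\Vdash_{\mathcal{B}}A\to B,\Gamma$ iff $A\Vdash_{\mathcal{B}}B,\Gamma$; ($\bot$) $\Vdash_{\mathcal{B}}\bot,\Gamma$ iff $\Vdash_{\mathcal{B}}\Gamma$; (Inf) for $n\ge1$, $\{A^1,\dots,A^n\}\Vdash_{\mathcal{B}}\Delta$ iff for every $\mathcal{C}\supseteq\mathcal{B}$ and all sets of atoms $\Theta^1_{\mathsf{At}},\dots,\Theta^n_{\mathsf{At}}$, if $\Vdash_{\mathcal{C}}\Theta^i_{\mathsf{At}},A^i$ for all $i$ then $\Vdash_{\mathcal{C}}\Theta^1_{\mathsf{At}},\dots,\Theta^n_{\mathsf{At}},\Delta$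 (and $\varnothing\Vdash_{\mathcal{B}}\Delta$ means $\Vdash_{\mathcal{B}}\Delta$). The atomic identity rule $\mathsf{Ainit}$ is the atomic axiom $\Gamma_{\mathsf{At}},p\Rightarrow p,\Delta_{\mathsf{At}}$; the atomic cut rule $\mathsf{Acut}$ has premises $\Gamma^1_{\mathsf{At}}\Rightarrow\Delta^1_{\mathsf{At}},p$ and $p,\Gamma^2_{\mathsf{At}}\Rightarrow\Delta^2_{\mathsf{At}}$ and conclusion $\Gamma^1_{\mathsf{At}},\Gamma^2_{\mathsf{At}}\Rightarrow\Delta^1_{\mathsf{At}},\Delta^2_{\mathsf{At}}$. $\mathcal{ST}$ is the base consisting of all instances of $\mathsf{Ainit}$ and $\mathsf{Acut}$. Validity: $\Gamma\Vdash\Delta$ iff $\Gamma\Vdash_{\mathcal{B}}\Delta$ for every base $\mathcal{B}\supseteq\mathcal{ST}$. $\mathsf{CLp}$ is the sequent calculus on sequents $\Gamma\Rightarrow\Delta$ (finite sets of formulas) with rules: $\mathsf{init}$: $\Gamma,A\Rightarrow A,\Delta$; $L\bot$: $\Gamma,\bot\Rightarrow\Delta$; $R\bot$: from $\Gamma\Rightarrow\Delta$ infer $\Gamma\Rightarrow\bot,\Delta$; $L\land$: from $A,B,\Gamma\Rightarrow\Delta$ infer $A\land B,\Gamma\Rightarrow\Delta$; $R\land$: from $\Gamma\Rightarrow\Delta,A$ and $\Gamma'\Rightarrow\Delta',B$ infer $\Gamma,\Gamma'\Rightarrow\Delta,\Delta',A\land B$; $L\lor$: from $A,\Gamma\Rightarrow\Delta$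 and $B,\Gamma'\Rightarrow\Delta'$ infer $A\lor B,\Gamma,\Gamma'\Rightarrow\Delta,\Delta'$; $R\lor$: from $\Gamma\Rightarrow\Delta,A,B$ infer $\Gamma\Rightarrow\Delta,A\lor B$; $L\to$: from $\Gamma\Rightarrow\Delta,A$ and $B,\Gamma'\Rightarrow\Delta'$ infer $A\to B,\Gamma,\Gamma'\Rightarrow\Delta,\Delta'$; $R\to$: from $A,\Gamma\Rightarrow\Delta,B$ infer $\Gamma\Rightarrow\Delta,A\to B$. *)

From Stdlib Require Import List Arith.
Import ListNotations.

Definition atom := nat.

Inductive form : Type :=
| Atom : atom -> form
| Bot  : form
| And  : form -> form -> form
| Or   : form -> form -> form
| Imp  : form -> form -> form.

Definition form_eq_dec : forall x y : form, {x = y} + {x <> y}.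
Proof. decide equality; apply Nat.eq_dec. Defined.

(** Finite sets are represented by lists; two lists denote the same set
    when they have the same members. *)
Definition seteq {T : Type} (l l' : list T) : Prop := forall x, In x l <-> In x l'.

Definition asequent := (list atom * list atom)%type.
Record arule := mkRule { prem : list asequent ; concl : asequent }.

Definition base := arule -> Prop.
Definition extends (C B : base) : Prop := forall r, B r -> C r.

(** Derivability |-_B of atomic sequents (Axiom/Weakening and Mix);
    conclusions are taken up to set equality. *)
Inductive derivable (B : base) : list atom -> list atom -> Prop :=
| d_axiom : forall r G D Th Si L R,
    B r -> prem r = [] -> concl r = (G, D) ->
    seteq L (Th ++ G) -> seteq R (D ++ Si) ->
    derivable B L R
| d_mix : forall r G D (ws : list (list atom * list atom)) L R,
    B r -> concl r = (G, D) ->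
    Forall2 (fun (p : asequent) (w : list atom * list atom) =>
               derivable B (fst w ++ fst p) (snd p ++ snd w)) (prem r) ws ->
    seteq L (concat (map fst ws) ++ G) ->
    seteq R (D ++ concat (map snd ws)) ->
    derivable B L R.

Inductive ST : base :=
| ST_init : forall G D p, ST (mkRule [] (G ++ [p], p :: D))
| ST_cut : forall G1 D1 G2 D2 p,
    ST (mkRule [(G1, D1 ++ [p]); (p :: G2, D2)] (G1 ++ G2, D1 ++ D2)).

Fixpoint fsize (A : form) : nat :=
  match A with
  | Atom _ => 0
  | Bot => 1
  | And A B | Or A B | Imp A B => S (fsize A + fsize B)
  end.

Definition weight (l : list form) : nat := fold_right (fun A n => fsize A + n) 0 l.

Fixpoint first_nonatomic (l : list form) : option form :=
  match l with
  | [] => None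
  | Atom _ :: l' => first_nonatomic l'
  | A :: _ => Some A
  end.

Fixpoint atoms_of (l : list form) : list atom :=
  match l with
  | [] => []
  | Atom p :: l' => p :: atoms_of l'
  | _ :: l' => atoms_of l'
  end.

Definition atomsF (Th : list atom) : list form := map Atom Th.

(** [supp k B l]: support of the set [l] in base [B], computed with fuel [k]
    (always called with fuel >= weight, so fuel never runs out). A non-atomic
    formula X of the set is chosen (the first one in the list) and the
    corresponding clause is applied to X, Gamma where Gamma is the set minus X. *)
Fixpoint supp (k : nat) (B : base) (l : list form) {struct k} : Prop :=
  match first_nonatomic l with
  | None => derivable B [] (atoms_of l)
  | Some X =>
      match k with
      | 0 => False
      | S k' =>
          let G := remove form_eq_dec X l in
          match X with
          | And A1 A2 => supp k' B (A1 :: G) /\ supp k' B (A2 :: G)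
          | Or A1 A2 => supp k' B (A1 :: A2 :: G)
          | Bot => supp k' B G
          | Imp A1 A2 =>                                             (* (->) + (Inf), n = 1 *)
              forall C : base, extends C B ->
              forall Th : list atom,
                supp k' C (atomsF Th ++ [A1]) ->
                supp k' C (atomsF Th ++ A2 :: G)
          | Atom _ => True (* unreachable *)
          end
      end
  end.

Definition supports (B : base) (l : list form) : Prop := supp (weight l) B l.

Definition infers (B : base) (G D : list form) : Prop :=
  match G with
  | [] => supports B D
  | _ => forall C : base, extends C B ->
         forall Ths : list (list atom),
           Forall2 (fun Th A => supports C (atomsF Th ++ [A])) Ths G ->
           supports C (atomsF (concat Ths) ++ D)
  end.

(** Validity: Gamma ||- Delta iff Gamma ||-_B Delta for every B extending ST.
    Gamma is read as a set (duplicates removed). *)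
Definition valid (G D : list form) : Prop :=
  forall B : base, extends B ST -> infers B (nodup form_eq_dec G) D.

Inductive CLp : list form -> list form -> Prop :=
| c_set : forall G D G' D', CLp G D -> seteq G G' -> seteq D D' -> CLp G' D'
| c_init : forall G D A, CLp (A :: G) (A :: D)
| c_Lbot : forall G D, CLp (Bot :: G) D
| c_Rbot : forall G D, CLp G D -> CLp G (Bot :: D)
| c_Land : forall A B G D, CLp (A :: B :: G) D -> CLp (And A B :: G) D
| c_Rand : forall A B G D G' D',
    CLp G (A :: D) -> CLp G' (B :: D') -> CLp (G ++ G') (And A B :: D ++ D')
| c_Lor : forall A B G D G' D',
    CLp (A :: G) D -> CLp (B :: G') D' -> CLp (Or A B :: G ++ G') (D ++ D')
| c_Ror : forall A B G D, CLp G (A :: B :: D) -> CLp G (Or A B :: D)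
| c_Limp : forall A B G D G' D',
    CLp G (A :: D) -> CLp (B :: G') D' -> CLp (Imp A B :: G ++ G') (D ++ D')
| c_Rimp : forall A B G D, CLp (A :: G) (B :: D) -> CLp G (Imp A B :: D).

(* Completeness by countermodel. Backward proof search in CLp either proves
   Gamma => Delta or yields a valuation v making Gamma true and Delta false. The base
   B_v extending ST with the axioms => p for true atoms p and p => for false ones is
   sound for v, so it does not derive the empty sequent. In every extension of B_v, a
   set containing a v-true formula is supported (for an implication with false
   antecedent, supporting the false premise set already makes the base inconsistent),
   while support of a set of v-false formulas yields the empty sequent, by cutting the
   false atoms against their axioms. Validity at B_v therefore gives a derivation of
   the empty sequent in B_v, a contradiction. *)

From Stdlib Require Import List Arith Lia Bool.
Import ListNotations.

Fixpoint derivable_nested_ind (B : base) (P : list atom -> list atom -> Prop)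
  (Hax : forall r G D Th Si L R, B r -> prem r = [] -> concl r = (G, D) ->
     seteq L (Th ++ G) -> seteq R (D ++ Si) -> P L R)
  (Hmix : forall r G D (ws : list (list atom * list atom)) L R,
     B r -> concl r = (G, D) ->
     Forall2 (fun (p : asequent) (w : list atom * list atom) =>
               P (fst w ++ fst p) (snd p ++ snd w)) (prem r) ws ->
     seteq L (concat (map fst ws) ++ G) ->
     seteq R (D ++ concat (map snd ws)) -> P L R)
  L R (H : derivable B L R) {struct H} : P L R :=
  match H with
  | d_axiom _ r G D Th Si L R Br Hp Hc HL HR => Hax r G D Th Si L R Br Hp Hc HL HR
  | d_mix _ r G D ws L R Br Hc HF HL HR =>
      Hmix r G D ws L R Br Hc
        ((fix premises ps ws' (F : Forall2 (fun (p : asequent) (w : list atom * list atom) =>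
               derivable B (fst w ++ fst p) (snd p ++ snd w)) ps ws')
           : Forall2 (fun (p : asequent) (w : list atom * list atom) =>
               P (fst w ++ fst p) (snd p ++ snd w)) ps ws' :=
           match F with
           | Forall2_nil _ => Forall2_nil _
           | Forall2_cons _ _ h t =>
               Forall2_cons _ _ (derivable_nested_ind B P Hax Hmix _ _ h) (premises _ _ t)
           end) _ _ HF) HL HR
  end.

Lemma seteq_refl {T} (l : list T) : seteq l l.
Proof. intro x; reflexivity. Qed.

Lemma seteq_sym {T} (l l' : list T) : seteq l l' -> seteq l' l.
Proof. intros H x; symmetry; apply H. Qed.

Lemma seteq_trans {T} (l l' l'' : list T) : seteq l l' -> seteq l' l'' -> seteq l l''.
Proof. intros H H' x; rewrite (H x); apply H'. Qed.

Lemma seteq_incl {T} (l l' : list T) : seteq l l' -> incl l l'.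
Proof. intros H x; apply H. Qed.

Lemma in_remove_iff X l A : In A (remove form_eq_dec X l) <-> In A l /\ A <> X.
Proof. split; [apply in_remove|intros [? ?]; apply in_in_remove; auto]. Qed.

Lemma seteq_cons_remove X l : In X l -> seteq (X :: remove form_eq_dec X l) l.
Proof.
  intros HX A; simpl; rewrite in_remove_iff.
  destruct (form_eq_dec A X); intuition congruence.
Qed.

Lemma seteq_cons_in {T} (x : T) l : In x l -> seteq (x :: l) l.
Proof. intros Hx y; simpl; intuition (subst; auto). Qed.

Lemma seteq_app_diag {T} (l : list T) : seteq (l ++ l) l.
Proof. intro x; rewrite in_app_iff; tauto. Qed.

Lemma extends_refl B : extends B B.
Proof. intros r Hr; exact Hr. Qed.

Lemma extends_trans B C E : extends E C -> extends C B -> extends E B.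
Proof. intros HEC HCB r Hr; apply HEC, HCB, Hr. Qed.

Lemma derivable_seteq B L R L' R' :
  derivable B L R -> seteq L L' -> seteq R R' -> derivable B L' R'.
Proof.
  intros [r G D Th Si ? ? Br Hp Hc HL HR | r G D ws ? ? Br Hc HF HL HR] HL' HR'.
  - eapply d_axiom; eauto using seteq_trans, seteq_sym.
  - eapply d_mix; eauto using seteq_trans, seteq_sym.
Qed.

Lemma derivable_extends B C L R : extends C B -> derivable B L R -> derivable C L R.
Proof.
  intros E H; induction H using derivable_nested_ind.
  - eapply d_axiom; eauto.
  - eapply d_mix; eauto.
Qed.

(* Extra succedents are pushed into the right context of the first premise. *)
Lemma derivable_weakenR B L R S : derivable B L R -> derivable B L (R ++ S).
Proof.
  intros H; revert S.
  induction H as [r G D Th Si L R Br Hp Hc HL HR|r G D ws L R Br Hc Hws HL HR]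
    using derivable_nested_ind; intros S.
  - eapply d_axiom with (Si := Si ++ S); eauto.
    intro x; specialize (HR x); rewrite !in_app_iff in *; tauto.
  - remember (prem r) as ps eqn:Hps; destruct Hws as [|p w ps ws Hw Hws].
    + eapply d_axiom with (Th := []) (Si := S); eauto.
      intro x; specialize (HR x); simpl in *; rewrite !in_app_iff in *; simpl in *; tauto.
    + eapply d_mix with (ws := (fst w, snd w ++ S) :: ws); eauto.
      * rewrite <- Hps; constructor; [simpl; rewrite app_assoc; apply Hw|].
        eapply Forall2_impl; [|exact Hws]; intros a b Hab.
        rewrite <- (app_nil_r (snd a ++ snd b)); auto.
      * intro y; specialize (HR y); simpl in *; rewrite !in_app_iff in *; tauto.
Qed.

Fixpoint eval (v : atom -> bool) (A : form) : bool :=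
  match A with
  | Atom p => v p
  | Bot => false
  | And A B => eval v A && eval v B
  | Or A B => eval v A || eval v B
  | Imp A B => implb (eval v A) (eval v B)
  end.

Definition atomic_true (v : atom -> bool) (L R : list atom) : Prop :=
  (exists p, In p L /\ v p = false) \/ (exists p, In p R /\ v p = true).

Lemma atomic_true_incl v L R L' R' :
  atomic_true v L R -> incl L L' -> incl R R' -> atomic_true v L' R'.
Proof. intros [[p [Hp Hv]]|[p [Hp Hv]]] HL HR; [left|right]; eauto. Qed.

Definition rule_sound (v : atom -> bool) (r : arule) : Prop :=
  forall ws : list (list atom * list atom),
    Forall2 (fun p w => atomic_true v (fst w ++ fst p) (snd p ++ snd w)) (prem r) ws ->
    atomic_true v (concat (map fst ws) ++ fst (concl r)) (snd (concl r) ++ concat (map snd ws)).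

Lemma derivable_sound v B L R :
  (forall r, B r -> rule_sound v r) -> derivable B L R -> atomic_true v L R.
Proof.
  intros Hsound H.
  induction H as [r G D Th Si L R Br Hp Hc HL HR|r G D ws L R Br Hc Hws HL HR]
    using derivable_nested_ind.
  - specialize (Hsound r Br (@nil _)); rewrite Hp, Hc in Hsound; simpl in Hsound.
    eapply atomic_true_incl; [exact (Hsound (Forall2_nil _))| |];
      intros x Hx; [apply HL|apply HR]; rewrite ?app_nil_r, in_app_iff in *; tauto.
  - specialize (Hsound r Br ws Hws); rewrite Hc in Hsound.
    eapply atomic_true_incl; [exact Hsound| |]; apply seteq_incl, seteq_sym; assumption.
Qed.

Inductive val_base (v : atom -> bool) : base :=
| val_base_ST r : ST r -> val_base v r
| val_base_true p : v p = true -> val_base v (mkRule [] ([], [p]))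
| val_base_false p : v p = false -> val_base v (mkRule [] ([p], [])).

Lemma val_base_rule_sound v r : val_base v r -> rule_sound v r.
Proof.
  intros Hr ws Hws; unfold atomic_true.
  destruct Hr as [r [G D p|G1 D1 G2 D2 p]|p Hp|p Hp]; simpl in *.
  - inversion Hws; subst; simpl.
    destruct (v p) eqn:Hv; [right|left]; exists p; rewrite ?in_app_iff; simpl; auto.
  - inversion Hws as [|? w1 ? ? Hw1 Hws2]; inversion Hws2 as [|? w2 ? ? Hw2 Hnil];
      inversion Hnil; subst; simpl in *.
    (* The cut atom p is true or false; the premise whose witness cannot be p decides. *)
    destruct (v p) eqn:Hvp;
      [destruct Hw2 as [[q [Hq Hvq]]|[q [Hq Hvq]]] | destruct Hw1 as [[q [Hq Hvq]]|[q [Hq Hvq]]]];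
      first [left; exists q; split; [|assumption] | right; exists q; split; [|assumption]];
      rewrite !in_app_iff in *; simpl in *; intuition congruence.
  - inversion Hws; subst; right; exists p; simpl; auto.
  - inversion Hws; subst; left; exists p; simpl; auto.
Qed.

Lemma val_base_consistent v : ~ derivable (val_base v) [] [].
Proof.
  intros H; apply (derivable_sound v) in H; [|apply val_base_rule_sound].
  destruct H as [[p [[] _]]|[p [[] _]]].
Qed.

Lemma weight_nil : weight [] = 0.
Proof. reflexivity. Qed.

Lemma weight_cons A l : weight (A :: l) = fsize A + weight l.
Proof. reflexivity. Qed.

Lemma weight_app l l' : weight (l ++ l') = weight l + weight l'.
Proof. induction l as [|A l IH]; [reflexivity|]; simpl app; rewrite !weight_cons; lia. Qed.

Lemma weight_atomsF Th : weight (atomsF Th) = 0.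
Proof. induction Th; simpl; auto. Qed.

Lemma weight_remove_le X l : weight (remove form_eq_dec X l) <= weight l.
Proof.
  induction l as [|A l IH]; cbn [remove]; auto.
  destruct (form_eq_dec X A); rewrite ?weight_cons; lia.
Qed.

Lemma weight_remove_lt X l : In X l -> fsize X + weight (remove form_eq_dec X l) <= weight l.
Proof.
  induction l as [|A l IH]; intros HX; [destruct HX|]; cbn [remove].
  destruct HX as [->|HX].
  - destruct (form_eq_dec X X); [|congruence].
    pose proof (weight_remove_le X l); rewrite weight_cons; lia.
  - destruct (form_eq_dec X A) as [<-|]; rewrite ?weight_cons.
    + pose proof (weight_remove_le X l); lia.
    + specialize (IH HX); lia.
Qed.

Ltac weight_lia :=
  rewrite ?weight_app, ?weight_cons, ?weight_nil, ?weight_atomsF in *; simpl fsize in *; lia.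

Lemma first_nonatomic_Some l X :
  first_nonatomic l = Some X -> In X l /\ forall p, X <> Atom p.
Proof.
  induction l as [|A l IH]; simpl; [discriminate|].
  destruct A; intros H; try (injection H as <-; split; [left; auto|discriminate]).
  destruct (IH H); auto.
Qed.

Lemma first_nonatomic_None l :
  first_nonatomic l = None -> forall A, In A l -> exists p, A = Atom p.
Proof.
  induction l as [|A l IH]; simpl; [tauto|].
  destruct A; intros H; try discriminate.
  intros B [<-|HB]; eauto.
Qed.

Lemma fsize_nonatomic X : (forall p, X <> Atom p) -> 1 <= fsize X.
Proof. destruct X; simpl; intros H; try lia. exfalso; eapply H; eauto. Qed.

Definition countermodel (v : atom -> bool) (G D : list form) : Prop :=
  (forall A, In A G -> eval v A = true) /\ (forall A, In A D -> eval v A = false).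

Definition provable_or_refutable (G D : list form) : Prop :=
  CLp G D \/ exists v, countermodel v G D.

Lemma countermodel_cons_l v A G D :
  countermodel v (A :: G) D <-> eval v A = true /\ countermodel v G D.
Proof.
  unfold countermodel; simpl; split.
  - intros [HG HD]; auto.
  - intros [HA [HG HD]]; split; auto; intros B [<-|HB]; auto.
Qed.

Lemma countermodel_cons_r v A G D :
  countermodel v G (A :: D) <-> eval v A = false /\ countermodel v G D.
Proof.
  unfold countermodel; simpl; split.
  - intros [HG HD]; auto.
  - intros [HA [HG HD]]; split; auto; intros B [<-|HB]; auto.
Qed.

Lemma provable_or_refutable_remove_l X G D :
  In X G -> provable_or_refutable (X :: remove form_eq_dec X G) D ->
  provable_or_refutable G D.
Proof.
  intros HX [H|[v Hv]]; [left|right].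
  - eapply c_set; [exact H|apply seteq_cons_remove; auto|apply seteq_refl].
  - exists v; destruct Hv as [HG HD]; split; auto.
    intros A HA; apply HG, seteq_cons_remove; auto.
Qed.

Lemma provable_or_refutable_remove_r X G D :
  In X D -> provable_or_refutable G (X :: remove form_eq_dec X D) ->
  provable_or_refutable G D.
Proof.
  intros HX [H|[v Hv]]; [left|right].
  - eapply c_set; [exact H|apply seteq_refl|apply seteq_cons_remove; auto].
  - exists v; destruct Hv as [HG HD]; split; auto.
    intros A HA; apply HD, seteq_cons_remove; auto.
Qed.

Ltac refute v :=
  right; exists v; rewrite ?countermodel_cons_l, ?countermodel_cons_r in *; simpl eval;
  repeat match goal with H : _ /\ _ |- _ => destruct H end;
  repeat match goal with H : eval v _ = _ |- _ => rewrite H end;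
  rewrite ?andb_false_r, ?orb_true_r, ?implb_true_r; auto.

Lemma provable_or_refutable_Lbot G D : provable_or_refutable (Bot :: G) D.
Proof. left; apply c_Lbot. Qed.

Lemma provable_or_refutable_Land A B G D :
  provable_or_refutable (A :: B :: G) D -> provable_or_refutable (And A B :: G) D.
Proof. intros [H|[v Hv]]; [left; apply c_Land, H|refute v]. Qed.

Lemma provable_or_refutable_Lor A B G D :
  provable_or_refutable (A :: G) D -> provable_or_refutable (B :: G) D ->
  provable_or_refutable (Or A B :: G) D.
Proof.
  intros [H|[v Hv]] [H'|[v' Hv']]; try refute v; try refute v'.
  left; eapply c_set; [apply (c_Lor _ _ _ _ _ _ H H')| |apply seteq_app_diag].
  intro x; simpl; rewrite in_app_iff; tauto.
Qed.

Lemma provable_or_refutable_Limp A B G D :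
  provable_or_refutable G (A :: D) -> provable_or_refutable (B :: G) D ->
  provable_or_refutable (Imp A B :: G) D.
Proof.
  intros [H|[v Hv]] [H'|[v' Hv']]; try refute v; try refute v'.
  left; eapply c_set; [apply (c_Limp _ _ _ _ _ _ H H')| |apply seteq_app_diag].
  intro x; simpl; rewrite in_app_iff; tauto.
Qed.

Lemma provable_or_refutable_Rbot G D :
  provable_or_refutable G D -> provable_or_refutable G (Bot :: D).
Proof. intros [H|[v Hv]]; [left; apply c_Rbot, H|refute v]. Qed.

Lemma provable_or_refutable_Rand A B G D :
  provable_or_refutable G (A :: D) -> provable_or_refutable G (B :: D) ->
  provable_or_refutable G (And A B :: D).
Proof.
  intros [H|[v Hv]] [H'|[v' Hv']]; try refute v; try refute v'.
  left; eapply c_set; [apply (c_Rand _ _ _ _ _ _ H H')|apply seteq_app_diag|].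
  intro x; simpl; rewrite in_app_iff; tauto.
Qed.

Lemma provable_or_refutable_Ror A B G D :
  provable_or_refutable G (A :: B :: D) -> provable_or_refutable G (Or A B :: D).
Proof. intros [H|[v Hv]]; [left; apply c_Ror, H|refute v]. Qed.

Lemma provable_or_refutable_Rimp A B G D :
  provable_or_refutable (A :: G) (B :: D) -> provable_or_refutable G (Imp A B :: D).
Proof. intros [H|[v Hv]]; [left; apply c_Rimp, H|refute v]. Qed.

Lemma provable_or_refutable_atomic G D :
  first_nonatomic G = None -> first_nonatomic D = None -> provable_or_refutable G D.
Proof.
  intros HG HD.
  destruct (Exists_dec (fun A => In A G) D (fun A => in_dec form_eq_dec A G)) as [Hex|Hno].
  - apply Exists_exists in Hex as [A [HAD HAG]]; left.
    eapply c_set; [apply (c_init G D A)|apply seteq_cons_in..]; auto.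
  - right; exists (fun p => if in_dec form_eq_dec (Atom p) G then true else false); split.
    + intros A HA; destruct (first_nonatomic_None G HG A HA) as [p ->]; simpl.
      destruct (in_dec form_eq_dec (Atom p) G); tauto.
    + intros A HA; destruct (first_nonatomic_None D HD A HA) as [p ->]; simpl.
      destruct (in_dec form_eq_dec (Atom p) G) as [HpG|]; auto.
      exfalso; apply Hno, Exists_exists; eauto.
Qed.

Lemma CLp_or_countermodel G D : provable_or_refutable G D.
Proof.
  remember (weight G + weight D) as n eqn:Hn; revert G D Hn.
  induction n as [n IH] using lt_wf_ind; intros G D Hn.
  destruct (first_nonatomic G) as [X|] eqn:EG.
  { destruct (first_nonatomic_Some G X EG) as [HX HXna].
    apply (provable_or_refutable_remove_l X); auto.
    pose proof (weight_remove_lt X G HX).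
    destruct X as [p| |X1 X2|X1 X2|X1 X2];
      [now destruct (HXna p)|apply provable_or_refutable_Lbot
      |apply provable_or_refutable_Land|apply provable_or_refutable_Lor
      |apply provable_or_refutable_Limp].
    all: eapply IH; [|reflexivity]; weight_lia. }
  destruct (first_nonatomic D) as [X|] eqn:ED.
  { destruct (first_nonatomic_Some D X ED) as [HX HXna].
    apply (provable_or_refutable_remove_r X); auto.
    pose proof (weight_remove_lt X D HX).
    destruct X as [p| |X1 X2|X1 X2|X1 X2];
      [now destruct (HXna p)|apply provable_or_refutable_Rbot
      |apply provable_or_refutable_Rand|apply provable_or_refutable_Ror
      |apply provable_or_refutable_Rimp].
    all: eapply IH; [|reflexivity]; weight_lia. }
  apply provable_or_refutable_atomic; auto.
Qed.

Lemma In_atoms_of p l : In p (atoms_of l) <-> In (Atom p) l.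
Proof.
  induction l as [|A l IH]; simpl; [tauto|].
  destruct A; simpl; rewrite ?IH; intuition congruence.
Qed.

Lemma supp_atomic k B l :
  first_nonatomic l = None -> supp k B l <-> derivable B [] (atoms_of l).
Proof. intros H; destruct k; simpl; rewrite H; reflexivity. Qed.

Lemma supp_inconsistent k C l : derivable C [] [] -> weight l <= k -> supp k C l.
Proof.
  revert C l; induction k as [|k IH]; intros C l H Hw; simpl;
    destruct (first_nonatomic l) as [X|] eqn:E;
    try exact (derivable_weakenR _ _ [] (atoms_of l) H).
  - destruct (first_nonatomic_Some l X E) as [HX HXna].
    pose proof (fsize_nonatomic X HXna); pose proof (weight_remove_lt X l HX); lia.
  - destruct (first_nonatomic_Some l X E) as [HX _]; pose proof (weight_remove_lt X l HX).
    destruct X; try exact I.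
    + apply IH; auto; weight_lia.
    + split; apply IH; auto; weight_lia.
    + apply IH; auto; weight_lia.
    + intros C' HC' Th _; apply IH; [exact (derivable_extends C C' [] [] HC' H)|weight_lia].
Qed.

Section ValuationBase.

Variable v : atom -> bool.

Lemma derivable_empty_of_false_atoms C Q :
  extends C (val_base v) -> (forall q, In q Q -> v q = false) ->
  derivable C [] Q -> derivable C [] [].
Proof.
  intros HC; induction Q as [|q Q IH]; intros HQ H; auto.
  apply IH; [intros; apply HQ; simpl; auto|].
  (* Cut q between the given sequent and the axiom q =>. *)
  eapply d_mix with (r := mkRule [([], Q ++ [q]); ([q], [])] ([] ++ [], Q ++ []))
    (ws := [([], []); ([], [])]); [apply HC, val_base_ST, ST_cut|reflexivity| | |].
  - constructor; [|constructor; [|constructor]]; simpl.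
    + eapply derivable_seteq; [exact H|apply seteq_refl|].
      intro x; simpl; rewrite !in_app_iff; simpl; tauto.
    + eapply d_axiom with (r := mkRule [] ([q], [])) (Th := []) (Si := []);
        [apply HC, val_base_false, HQ; simpl; auto|reflexivity..|apply seteq_refl|apply seteq_refl].
  - apply seteq_refl.
  - intro x; simpl; rewrite !in_app_iff; simpl; tauto.
Qed.

Definition true_sets_supported (k : nat) : Prop :=
  forall C l, extends C (val_base v) -> weight l <= k ->
    (exists A, In A l /\ eval v A = true) -> supp k C l.

Definition false_sets_inconsistent (k : nat) : Prop :=
  forall C l, extends C (val_base v) -> weight l <= k ->
    (forall A, In A l -> eval v A = false) -> supp k C l -> derivable C [] [].

Lemma true_atomic_supported k C l :
  extends C (val_base v) -> first_nonatomic l = None ->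
  (exists A, In A l /\ eval v A = true) -> supp k C l.
Proof.
  intros HC E [A [HA HvA]]; apply supp_atomic; auto.
  destruct (first_nonatomic_None l E A HA) as [p ->].
  eapply d_axiom with (r := mkRule [] ([], [p])) (Th := []) (Si := atoms_of l);
    [apply HC, val_base_true; exact HvA|reflexivity..|apply seteq_refl|].
  intro x; simpl; rewrite In_atoms_of; intuition (subst; auto).
Qed.

Lemma false_atomic_inconsistent k C l :
  extends C (val_base v) -> first_nonatomic l = None ->
  (forall A, In A l -> eval v A = false) -> supp k C l -> derivable C [] [].
Proof.
  intros HC E Hf H; apply supp_atomic in H; auto.
  apply (derivable_empty_of_false_atoms C (atoms_of l)); auto.
  intros q Hq; apply (Hf (Atom q)), In_atoms_of, Hq.
Qed.

Section SuppStep.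

Variable k : nat.
Hypothesis true_sets_supported_k : true_sets_supported k.
Hypothesis false_sets_inconsistent_k : false_sets_inconsistent k.

Lemma supp_principal_true C l X :
  extends C (val_base v) -> weight l <= S k -> first_nonatomic l = Some X ->
  eval v X = true -> supp (S k) C l.
Proof.
  intros HC Hw E HvX; destruct (first_nonatomic_Some l X E) as [HX _].
  pose proof (weight_remove_lt X l HX).
  simpl; rewrite E; destruct X as [p| |X1 X2|X1 X2|X1 X2]; simpl in HvX;
    try discriminate; try exact I.
  - apply andb_true_iff in HvX as [HvX1 HvX2].
    split; apply true_sets_supported_k; auto; try weight_lia;
      [exists X1|exists X2]; simpl; auto.
  - apply true_sets_supported_k; auto; [weight_lia|].
    apply orb_true_iff in HvX as [HvXi|HvXi]; [exists X1|exists X2]; simpl; auto.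
  - intros C' HC' Th Hs.
    pose proof (extends_trans _ _ _ HC' HC) as HC'v.
    destruct (eval v X2) eqn:HvX2.
    { apply true_sets_supported_k; auto; [weight_lia|].
      exists X2; rewrite in_app_iff; simpl; auto. }
    destruct (Exists_dec (fun p => v p = true) Th (fun p => bool_dec (v p) true))
      as [Hex|Hno].
    { apply Exists_exists in Hex as [p [Hp Hvp]].
      apply true_sets_supported_k; auto; [weight_lia|].
      exists (Atom p); rewrite in_app_iff; split; auto; left; apply in_map, Hp. }
    (* Otherwise every formula of Th, X1 is false, so C' is inconsistent. *)
    apply supp_inconsistent; [|weight_lia].
    apply (false_sets_inconsistent_k C' (atomsF Th ++ [X1])); auto; [weight_lia|].
    intros B HB; apply in_app_iff in HB as [HB|[HB|[]]].
    + apply in_map_iff in HB as [p [<- Hp]]; simpl.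
      destruct (v p) eqn:Hvp; auto; exfalso; apply Hno, Exists_exists; eauto.
    + subst B; destruct (eval v X1); auto.
Qed.

Lemma supp_side_true C l X A :
  extends C (val_base v) -> weight l <= S k -> first_nonatomic l = Some X ->
  In A l -> A <> X -> eval v A = true -> supp (S k) C l.
Proof.
  intros HC Hw E HA HAX HvA; destruct (first_nonatomic_Some l X E) as [HX _].
  pose proof (weight_remove_lt X l HX).
  assert (HAG : In A (remove form_eq_dec X l)) by (apply in_remove_iff; auto).
  simpl; rewrite E; destruct X; try exact I.
  - apply true_sets_supported_k; eauto; weight_lia.
  - split; apply true_sets_supported_k; auto; try weight_lia; exists A; simpl; auto.
  - apply true_sets_supported_k; auto; [weight_lia|]; exists A; simpl; auto.
  - intros C' HC' Th _; apply true_sets_supported_k; [exact (extends_trans _ _ _ HC' HC)|weight_lia|].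
    exists A; rewrite in_app_iff; simpl; auto.
Qed.

Lemma true_sets_supported_S : true_sets_supported (S k).
Proof.
  intros C l HC Hw [A [HA HvA]].
  destruct (first_nonatomic l) as [X|] eqn:E; [|apply true_atomic_supported; eauto].
  destruct (form_eq_dec A X) as [<-|HAX];
    [eapply supp_principal_true|eapply supp_side_true]; eauto.
Qed.

Lemma false_sets_inconsistent_S : false_sets_inconsistent (S k).
Proof.
  intros C l HC Hw Hf H.
  destruct (first_nonatomic l) as [X|] eqn:E; [|eapply false_atomic_inconsistent; eauto].
  destruct (first_nonatomic_Some l X E) as [HX HXna].
  pose proof (weight_remove_lt X l HX).
  assert (HfG : forall A, In A (remove form_eq_dec X l) -> eval v A = false)
    by (intros A HA; apply in_remove_iff in HA as [HA _]; auto).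
  pose proof (Hf X HX) as HvX; simpl in H; rewrite E in H.
  destruct X as [p| |X1 X2|X1 X2|X1 X2]; simpl in HvX.
  - now destruct (HXna p).
  - apply (false_sets_inconsistent_k C (remove form_eq_dec Bot l)); auto; weight_lia.
  - destruct H as [H1 H2].
    destruct (eval v X1) eqn:HvX1;
      [apply (false_sets_inconsistent_k C _ HC) in H2|apply (false_sets_inconsistent_k C _ HC) in H1];
      auto; try weight_lia; intros B [<-|HB]; auto.
  - apply orb_false_iff in HvX as [HvX1 HvX2].
    apply (false_sets_inconsistent_k C _ HC) in H; auto; [weight_lia|].
    intros B [<-|[<-|HB]]; auto.
  - assert (HvX1 : eval v X1 = true) by (destruct (eval v X1); auto).
    assert (HvX2 : eval v X2 = false) by (rewrite HvX1 in HvX; exact HvX).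
    specialize (H C (extends_refl _) []); simpl in H.
    apply (false_sets_inconsistent_k C (X2 :: remove form_eq_dec (Imp X1 X2) l)); auto.
    + weight_lia.
    + intros B [<-|HB]; auto.
    + apply H, true_sets_supported_k; auto; [weight_lia|exists X1; simpl; auto].
Qed.

End SuppStep.

Lemma supp_val_base k : true_sets_supported k /\ false_sets_inconsistent k.
Proof.
  induction k as [|k [IHT IHF]];
    [|split; [apply true_sets_supported_S|apply false_sets_inconsistent_S]; auto].
  split.
  - intros C l HC Hw Hex.
    destruct (first_nonatomic l) as [X|] eqn:E; [|apply true_atomic_supported; auto].
    destruct (first_nonatomic_Some l X E) as [HX HXna].
    pose proof (fsize_nonatomic X HXna); pose proof (weight_remove_lt X l HX); lia.
  - intros C l HC Hw Hf H.
    destruct (first_nonatomic l) as [X|] eqn:E; [|eapply false_atomic_inconsistent; eauto].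
    simpl in H; rewrite E in H; destruct H.
Qed.

End ValuationBase.

Lemma supports_true_premises v G :
  (forall A, In A G -> eval v A = true) ->
  Forall2 (fun Th A => supports (val_base v) (atomsF Th ++ [A])) (map (fun _ => []) G) G.
Proof.
  induction G as [|A G IH]; intros HG; constructor; [|apply IH; intros; apply HG; simpl; auto].
  apply (proj1 (supp_val_base v _)); [apply extends_refl|auto|].
  exists A; split; [left|apply HG; left]; reflexivity.
Qed.

Lemma infers_true_premises v G D :
  (forall A, In A G -> eval v A = true) -> infers (val_base v) G D -> supports (val_base v) D.
Proof.
  destruct G as [|A G]; [auto|]; intros HG H.
  specialize (H (val_base v) (extends_refl _) _ (supports_true_premises v _ HG)).
  rewrite (proj2 (concat_nil_Forall _)) in H; [exact H|].
  apply Forall_forall; intros x Hx; apply in_map_iff in Hx as [? [<- _]]; reflexivity.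
Qed.

Lemma supports_false_inconsistent v D :
  (forall A, In A D -> eval v A = false) -> supports (val_base v) D ->
  derivable (val_base v) [] [].
Proof. apply (proj2 (supp_val_base v _)); [apply extends_refl|auto]. Qed.

Theorem theorem3 : forall G D : list form, valid G D -> CLp G D.
Proof.
  intros G D Hvalid.
  destruct (CLp_or_countermodel G D) as [H|[v [HG HD]]]; [exact H|exfalso].
  apply (val_base_consistent v), (supports_false_inconsistent v D HD).
  apply (infers_true_premises v (nodup form_eq_dec G)).
  - intros A HA; apply HG, (nodup_In form_eq_dec), HA.
  - apply Hvalid; intros r Hr; apply val_base_ST, Hr.
Qed.
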